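(* Let $n\geq 5$ be an odd integer. Then $\beta_2^s(J_n)=n+5$.
   Context: Flower snark $J_n$ ($n\geq 5$ odd): take $n$ disjoint stars $K_{1,3}$, the $i$th with vertices $T_i=\{a_i,b_i,c_i,d_i\}$, centre $b_i$ and leaves $a_i,c_i,d_i$; add the cycle $a_1a_2\cdots a_na_1$ and the cycle $c_1c_2\cdots c_nd_1d_2\cdots d_nc_1$. $d$ is the shortest-path distance, $d(s,X)=\min_{x\in X}d(s,x)$ for nonempty $X$, $\mathcal{D}_S(X)=(d(s_1,X),\dots,d(s_k,X))$. $S$ is a $2$-solid-resolving set if $\mathcal{D}_S(X)\neq\mathcal{D}_S(Y)$ for all distinct nonempty vertex sets $X,Y$ with $|X|\leq 2$ ($Y$ of arbitrary size); $\beta_2^s(J_n)$ is the minimum size of such a set. *)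

From mathcomp Require Import all_boot.
Set Implicit Arguments. Unset Strict Implicit. Unset Printing Implicit Defensive.

Section GraphDist.
Variables (T : finType) (adj : rel T).

Definition ball (k : nat) (x : T) : {set T} :=
  iter k (fun A : {set T} => A :|: [set y | [exists z in A, adj z y]]) [set x].

(* shortest-path distance: least k with y in ball k x
   (equals #|T| if y is unreachable; the flower snark is connected) *)
Definition gdist (x y : T) : nat :=
  find (fun k => y \in ball k x) (iota 0 #|T|).

(* d(s, X) = min_{x in X} d(s, x)  (used for nonempty X only) *)
Definition setdist (s : T) (X : {set T}) : nat :=
  \big[minn/#|T|]_(x in X) gdist s x.

(* S is 2-solid-resolving: D_S(X) <> D_S(Y) for all distinct nonempty X, Y
   with |X| <= 2; D_S(X) = D_S(Y) iff d(s,X) = d(s,Y) for every s in S *)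
Definition solid2_resolving (S : {set T}) : Prop :=
  forall X Y : {set T}, X != set0 -> Y != set0 -> X != Y -> #|X| <= 2 ->
    exists2 s, s \in S & setdist s X != setdist s Y.

End GraphDist.

(* vertex (t, i): t = 0,1,2,3 stands for a,b,c,d ; i : 'I_n is the index
   (0-based: index i here is i+1 in the paper). *)
Definition Jvert (n : nat) := ('I_4 * 'I_n)%type.

Definition Jarc (n : nat) (u v : Jvert n) : bool :=
  let t := nat_of_ord u.1 in let i := nat_of_ord u.2 in
  let t' := nat_of_ord v.1 in let j := nat_of_ord v.2 in
  [|| (t == 1) && (t' != 1) && (i == j)
    , (t == 0) && (t' == 0) && (j == (i.+1 %% n))
    , (t == 2) && (t' == 2) && (j == i.+1)
    , (t == 2) && (t' == 3) && (i == n.-1) && (j == 0)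
    , (t == 3) && (t' == 3) && (j == i.+1)
    | (t == 3) && (t' == 2) && (i == n.-1) && (j == 0) ].

Definition Jadj (n : nat) : rel (Jvert n) := fun u v => Jarc u v || Jarc v u.

(* A 2-solid-resolving set S must contain, for every vertex y and vertices x1, x2 other than y,
   a vertex strictly nearer to y than to both x1 and x2.  Writing n = 2h + 1 and choosing such
   triples in J_n: if b_i is not in S then a_i, c_i and d_i are; every arc of h consecutive
   vertices of the outer cycle contains an a-vertex of S, hence S has at least three of them
   (double counting, as 2h < n); every arc of h + 1 consecutive vertices of the inner 2n-cycle
   contains a c- or d-vertex of S, hence S has at least four of them.  Counting index by index
   gives |S| >= n + 5.  Conversely {a_0, a_h, a_(h+1), c_0, c_h, d_0, d_h} together with the
   b_i, i <> 0, h, has n + 5 vertices, and for every vertex y outside it there are three of its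
   vertices such that every x <> y is farther than y from two of them; two such pairs always
   share a vertex.  All distances are read off a closed formula, which is checked against the
   characterisation of graph distance as the unique potential that is 1-Lipschitz along edges
   and decreases by one along some edge into every vertex but the source. *)

From Stdlib Require Import ZArith Lia.
From mathcomp Require Import all_boot zify.

Set Implicit Arguments. Unset Strict Implicit. Unset Printing Implicit Defensive.

(** * Graph distance and 2-solid-resolving sets *)

Section BigMin.
Variables (I : eqType) (r : seq I) (P : pred I) (F : I -> nat) (k : nat).

Lemma bigmin_leq_seq i : i \in r -> P i -> \big[minn/k]_(j <- r | P j) F j <= F i.
Proof.
elim: r => // j r' IH; rewrite inE big_cons => /orP [/eqP <- -> | /IH le_i Pi].
  exact: geq_minl.
by case: ifP => _; [apply: leq_trans (geq_minr _ _) (le_i Pi) | apply: le_i].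
Qed.

Lemma leq_bigmin m : m <= k -> (forall i, P i -> m <= F i) ->
  m <= \big[minn/k]_(i <- r | P i) F i.
Proof. by move=> le_mk le_mF; elim/big_ind: _ => // a b le_ma le_mb; rewrite leq_min le_ma. Qed.

End BigMin.

Lemma card_slices (T1 T2 : finType) (S : {set T1 * T2}) :
  #|S| = \sum_(a : T1) #|[set b | (a, b) \in S]|.
Proof.
rewrite -sum1_card (eq_bigl (fun p => (p.1, p.2) \in S)) => [|[] //].
rewrite -(pair_big_dep xpredT (fun a b => (a, b) \in S) (fun _ _ => 1)) /=.
by apply: eq_bigr => a _; rewrite sum1dep_card.
Qed.

Section GraphDistance.
Variables (T : finType) (adj : rel T).

Lemma ballS k x :
  ball adj k.+1 x = ball adj k x :|: [set y | [exists z in ball adj k x, adj z y]].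
Proof. by []. Qed.

Lemma mem_ball_adj k x z y : z \in ball adj k x -> adj z y -> y \in ball adj k.+1 x.
Proof.
by move=> zk zy; rewrite ballS !inE; apply/orP; right; apply/existsP; exists z; rewrite zk.
Qed.

Lemma gdist_le_card s v : gdist adj s v <= #|T|.
Proof. by rewrite /gdist -[leqRHS](size_iota 0 #|T|) find_size. Qed.

Lemma gdist_leq s v k : k < #|T| -> v \in ball adj k s -> gdist adj s v <= k.
Proof.
move=> lt_kT vk; rewrite leqNgt; apply/negP => /(before_find 0).
by rewrite nth_iota // add0n vk.
Qed.

Lemma mem_ball_gdist s v : gdist adj s v < #|T| -> v \in ball adj (gdist adj s v) s.
Proof.
move=> lt_dT; have reach : has (fun k => v \in ball adj k s) (iota 0 #|T|).
  by rewrite has_find size_iota.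
by have := nth_find 0 reach; rewrite nth_iota.
Qed.

Lemma gdist_refl s : gdist adj s s = 0.
Proof.
have T0 : 0 < #|T| by apply/card_gt0P; exists s.
by apply/eqP; rewrite -leqn0 gdist_leq // inE.
Qed.

Lemma gdist_gt0 s v : v != s -> 0 < gdist adj s v.
Proof.
have T0 : 0 < #|T| by apply/card_gt0P; exists s.
move=> vs; rewrite lt0n; apply: contra vs => /eqP d0.
by have := @mem_ball_gdist s v; rewrite d0 T0 inE => /(_ isT).
Qed.

Section Potential.
Variables (s : T) (f : T -> nat).
Hypothesis f_s : f s = 0.
Hypothesis f_lipschitz : forall u v, adj u v -> f v <= (f u).+1.
Hypothesis f_pred : forall v, v != s -> exists2 w, adj w v & (f w).+1 = f v.
Hypothesis f_lt_card : forall v, f v < #|T|.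

Lemma potential_mem_ball v : v \in ball adj (f v) s.
Proof.
suff: forall k v, f v = k -> v \in ball adj k s by apply.
elim=> [|k IH] {}v fv.
  by have [->|/f_pred [w _]] := eqVneq v s; rewrite ?inE // fv.
have [vs|/f_pred [w wv fw]] := eqVneq v s; first by rewrite vs f_s in fv.
by apply: mem_ball_adj wv; apply: IH; rewrite fv in fw; case: fw.
Qed.

Lemma potential_le_ball k v : v \in ball adj k s -> f v <= k.
Proof.
elim: k v => [|k IH] v; first by rewrite inE => /eqP ->; rewrite f_s.
rewrite ballS !inE => /orP [/IH /leqW // | /existsP [z /andP [zk zv]]].
by apply: leq_trans (f_lipschitz zv) _; rewrite ltnS IH.
Qed.

Lemma gdist_potential v : gdist adj s v = f v.
Proof.
have le_df : gdist adj s v <= f v by apply: gdist_leq (potential_mem_ball v).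
apply/eqP; rewrite eqn_leq le_df potential_le_ball // mem_ball_gdist //.
exact: leq_ltn_trans le_df (f_lt_card v).
Qed.

End Potential.

Lemma setdist_leq s (X : {set T}) x : x \in X -> setdist adj s X <= gdist adj s x.
Proof. by move=> xX; apply: bigmin_leq_seq; rewrite ?mem_index_enum. Qed.

Lemma leq_setdist s (X : {set T}) m :
  m <= #|T| -> (forall x, x \in X -> m <= gdist adj s x) -> m <= setdist adj s X.
Proof. exact: leq_bigmin. Qed.

Lemma setdist_lt s (X Y : {set T}) z : X != set0 -> z \in Y ->
  (forall x, x \in X -> gdist adj s z < gdist adj s x) -> setdist adj s Y < setdist adj s X.
Proof.
case/set0Pn=> x0 x0X zY ltX; apply: leq_ltn_trans (setdist_leq s zY) _.
by apply: leq_setdist => //; apply: leq_trans (ltX _ x0X) (gdist_le_card s x0).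
Qed.

Definition nearer (y x1 x2 : T) : {set T} :=
  [set s | (gdist adj s y < gdist adj s x1) && (gdist adj s y < gdist adj s x2)].

Lemma nearer_self y x1 x2 : x1 != y -> x2 != y -> y \in nearer y x1 x2.
Proof. by move=> x1y x2y; rewrite inE gdist_refl !gdist_gt0. Qed.

Lemma card_le2_set2 (X : {set T}) : X != set0 -> #|X| <= 2 -> exists x1 x2, X = [set x1; x2].
Proof.
move=> X0; rewrite leq_eqVlt ltnS leq_eqVlt ltnS leqn0 cards_eq0 (negbTE X0) orbF.
case/orP => [/cards2P [x1 [x2 [_ ->]]] | /cards1P [x ->]]; first by exists x1, x2.
by exists x, x; rewrite setUid.
Qed.

Lemma solid2_resolving_nearer (S : {set T}) : solid2_resolving adj S ->
  forall y x1 x2, x1 != y -> x2 != y -> exists2 s, s \in S & s \in nearer y x1 x2.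
Proof.
move=> solidS y x1 x2 x1y x2y; set X := [set x1; x2]; set Y := y |: X.
have x1X : x1 \in X by rewrite !inE eqxx.
have yX : y \notin X by rewrite !inE !(eq_sym y) negb_or x1y.
have X0 : X != set0 by apply/set0Pn; exists x1.
have Y0 : Y != set0 by apply/set0Pn; exists y; rewrite setU11.
have XY : X != Y by apply: contraNneq yX => ->; rewrite setU11.
have cardX : #|X| <= 2 by rewrite cards2; case: (_ != _).
have [s sS neqXY] := solidS X Y X0 Y0 XY cardX.
have XT : setdist adj s X <= #|T| := leq_trans (setdist_leq s x1X) (gdist_le_card s x1).
have YX : setdist adj s Y <= setdist adj s X.
  apply: leq_setdist => [|x xX]; last by apply: setdist_leq; rewrite inE xX orbT.
  exact: leq_trans (setdist_leq s (setU11 y X)) (gdist_le_card s y).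
have lt_yX : gdist adj s y < setdist adj s X.
  rewrite ltnNge; apply: contra neqXY => Xy; rewrite eqn_leq YX andbT.
  by apply: leq_setdist => // x; rewrite in_setU1 => /orP [/eqP -> // | xX]; apply: setdist_leq.
by exists s; rewrite // inE !(leq_trans lt_yX) // setdist_leq // !inE eqxx ?orbT.
Qed.

Lemma nearer_solid2_resolving (S : {set T}) :
  (forall y x1 x2, x1 != y -> x2 != y -> exists2 s, s \in S & s \in nearer y x1 x2) ->
  solid2_resolving adj S.
Proof.
move=> sepS X Y X0 Y0 XY cardX; have [x1 [x2 defX]] := card_le2_set2 X0 cardX.
case: (boolP (Y \subset X)) => [YsubX | /subsetPn [y yY yX]]; last first.
  have [x1y x2y] : x1 != y /\ x2 != y.
    by move: yX; rewrite defX !inE negb_or !(eq_sym y) => /andP.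
  have [s sS] := sepS y x1 x2 x1y x2y; rewrite inE => /andP [lt1 lt2].
  exists s => //; rewrite neq_ltn (setdist_lt X0 yY) ?orbT // => x.
  by rewrite defX !inE => /orP [] /eqP ->.
have YpX : Y \proper X by rewrite properEneq eq_sym XY.
have [y defY] : exists y, Y = [set y].
  apply/cards1P; rewrite eqn_leq card_gt0 Y0 andbT -ltnS.
  exact: leq_trans (proper_card YpX) cardX.
have [_ [x xX xY]] := properP YpX.
have xy : y != x by apply: contraNneq xY => <-; rewrite defY set11.
have [s sS] := sepS x y y xy xy; rewrite inE andbb => lt_xy.
exists s => //; rewrite neq_ltn (setdist_lt Y0 xX) // => z.
by rewrite defY inE => /eqP ->.
Qed.

Lemma solid2_resolvingP (S : {set T}) : solid2_resolving adj S <->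
  forall y x1 x2, x1 != y -> x2 != y -> exists2 s, s \in S & s \in nearer y x1 x2.
Proof. by split; [apply: solid2_resolving_nearer | apply: nearer_solid2_resolving]. Qed.

End GraphDistance.

(* For w, p < m: p is one of the L consecutive points w, w + 1, ..., w + L - 1 of the m-cycle. *)
Definition in_arc (m L w p : nat) : Prop := w <= p < w + L \/ p + m < w + L.

(* Every point lies on exactly L of the m arcs, so double counting gives m <= #|A| * L. *)
Lemma cover_arcs_card m L (A : {set 'I_m}) : L <= m ->
  (forall w : 'I_m, exists2 p, p \in A & in_arc m L w p) -> m <= #|A| * L.
Proof.
move=> Lm coverA.
have off_lt (p w : 'I_m) : (if w <= p then p - w else p + m - w) < m.
  by case: ifP; have := ltn_ord p; have := ltn_ord w; lia.
pose off p w := Ordinal (off_lt p w).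
have off_inj p : injective (off p).
  move=> w1 w2 /(congr1 val) /=; have := ltn_ord w1; have := ltn_ord w2.
  by do 2 case: ifP; move=> *; apply: val_inj => /=; lia.
have count_arcs (p : 'I_m) : \sum_(w < m) (off p w < L) = L.
  have <- : \sum_(k < m) (k < L) = \sum_(w < m) (off p w < L).
    exact: (reindex_inj (off_inj p) (F := fun k : 'I_m => nat_of_bool (k < L))).
  by rewrite -big_mkcond /= (big_ord_narrow Lm) big_const_ord iter_addn_0 mul1n.
apply: leq_trans (_ : \sum_(w < m) \sum_(p in A) (off p w < L) <= _).
  rewrite -[m in m <= _]card_ord -sum1_card; apply: leq_sum => w _.
  have [p pA] := coverA w; rewrite /in_arc => arc_p.
  have near : off p w < L.
    by have := ltn_ord p; have := ltn_ord w; rewrite /=; case: ifP; lia.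
  by rewrite (bigD1 p) //= near.
by rewrite exchange_big /= (eq_bigr _ (fun p _ => count_arcs p)) sum_nat_const.
Qed.

(** * Distances in the flower snark *)

(* The distance in J_n between the vertices of types t, u (0, 1, 2, 3 for a, b, c, d) and
   indices i, j, where d is the distance of i and j on the n-cycle; between two b-vertices it
   is 0 if i = j and d + 2 otherwise. *)
Definition jdist (n t i u j : nat) : Z :=
  let k := Z.abs (Z.of_nat i - Z.of_nat j) in
  let d := Z.min k (Z.of_nat n - k) in
  match t, u with
  | 0, 0 => d
  | 1, 1 => Z.min (d + 2) (3 * d)
  | 0, 1 | 1, _ | _, 1 => (d + 1)%Z
  | 0, _ | _, 0 => (d + 2)%Z
  | 2, 2 | 3, 3 => Z.min k (Z.of_nat n + 2 - k)
  | _, _ => Z.min (Z.of_nat n - k) (k + 2)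
  end.

Definition jarc (n t i u j : nat) : Prop :=
  (t = 1 /\ u <> 1 /\ i = j) \/
  (t = 0 /\ u = 0 /\ (j = i.+1 \/ i.+1 = n /\ j = 0)) \/
  ((t = 2 \/ t = 3) /\ u = t /\ j = i.+1) \/
  (t + u = 5 /\ i.+1 = n /\ j = 0).

Ltac case_le3 t :=
  have [?|[?|[?|?]]] : t = 0 \/ t = 1 \/ t = 2 \/ t = 3 by [lia]; subst t.

Ltac case_type t := case_le3 t; cbv beta iota zeta delta [jdist] in *.

(* Closes a goal of [jdist_pred] given the three neighbours of (u, j); one of them is one
   step nearer to (t, i). *)
Ltac closer_neighbour tw1 jw1 tw2 jw2 tw3 jw3 :=
  match goal with |- exists _ _, and4 _ _ _ (_ = jdist ?n ?t ?i ?u ?j) =>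
  have [E|[E|E]] : (jdist n t i tw1 jw1 + 1 = jdist n t i u j \/
     jdist n t i tw2 jw2 + 1 = jdist n t i u j \/ jdist n t i tw3 jw3 + 1 = jdist n t i u j)%Z
    by [case_type t; lia];
  [exists tw1, jw1 | exists tw2, jw2 | exists tw3, jw3]; rewrite /jarc; split; lia
  end.

Section FlowerSnark.
Variable m : nat.
Hypothesis m_ge4 : 4 <= m.
Local Notation n := m.+1.

Lemma jdist_refl t i : t <= 3 -> jdist n t i t i = 0%Z.
Proof. by move=> t3; case_type t; lia. Qed.

Lemma jdist_bounds t i u j : t <= 3 -> u <= 3 -> i < n -> j < n ->
  (0 <= jdist n t i u j <= Z.of_nat n + 2)%Z.
Proof. by move=> t3 u3 *; case_type t; case_type u; lia. Qed.

Lemma jdist_lipschitz t i t1 i1 t2 i2 : t <= 3 -> t1 <= 3 -> t2 <= 3 ->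
  i < n -> i1 < n -> i2 < n -> jarc n t1 i1 t2 i2 \/ jarc n t2 i2 t1 i1 ->
  (jdist n t i t2 i2 <= jdist n t i t1 i1 + 1)%Z.
Proof. by rewrite /jarc => t3 t13 t23 *; case_type t; case_type t1; case_type t2; lia. Qed.

Lemma jdist_pred t i u j : t <= 3 -> u <= 3 -> i < n -> j < n -> ~ (u = t /\ j = i) ->
  exists tw jw, [/\ tw <= 3, jw < n, jarc n tw jw u j \/ jarc n u j tw jw
                 & (jdist n t i tw jw + 1 = jdist n t i u j)%Z].
Proof.
move=> t3 u3 i_n; case: j => [|j] j_n ne; last have [jm|jm] := eqVneq j.+1 m.
- case_le3 u.
  + closer_neighbour 0 1 0 m 1 0.
  + closer_neighbour 0 0 2 0 3 0.
  + closer_neighbour 1 0 2 1 3 m.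
  + closer_neighbour 1 0 3 1 2 m.
- case_le3 u.
  + closer_neighbour 0 0 0 j 1 j.+1.
  + closer_neighbour 0 j.+1 2 j.+1 3 j.+1.
  + closer_neighbour 1 j.+1 3 0 2 j.
  + closer_neighbour 1 j.+1 2 0 3 j.
- case_le3 u.
  + closer_neighbour 0 j.+2 0 j 1 j.+1.
  + closer_neighbour 0 j.+1 2 j.+1 3 j.+1.
  + closer_neighbour 1 j.+1 2 j.+2 2 j.
  + closer_neighbour 1 j.+1 3 j.+2 3 j.
Qed.

Definition vtx (t i : nat) : Jvert n := (inord t, inord i).

Lemma vtx_fst t i : t <= 3 -> (vtx t i).1 = t :> nat.
Proof. exact: inordK. Qed.

Lemma vtx_snd t i : i < n -> (vtx t i).2 = i :> nat.
Proof. exact: inordK. Qed.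

Lemma vtxK (v : Jvert n) : vtx v.1 v.2 = v.
Proof. by case: v => t i; rewrite /vtx !inord_val. Qed.

Lemma fst_le3 (v : Jvert n) : v.1 <= 3.
Proof. by rewrite -ltnS ltn_ord. Qed.

Lemma Jvert_neq (u v : Jvert n) : u != v -> ~ (u.1 = v.1 :> nat /\ u.2 = v.2 :> nat).
Proof.
move=> uv [/val_inj E1 /val_inj E2]; move: uv.
by rewrite [u]surjective_pairing E1 E2 -surjective_pairing eqxx.
Qed.

Lemma Jarc_jarc (u v : Jvert n) : Jarc u v <-> jarc n u.1 u.2 v.1 v.2.
Proof.
case: u v => [[t t4] [i i_n]] [[u u4] [j j_n]]; rewrite /Jarc /jarc /=.
have -> : (j == i.+1 %% n) = (j == i.+1) && (i.+1 < n) || (j == 0) && (i.+1 == n).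
  have [lt|->] : i.+1 < n \/ i.+1 = n by lia.
    by rewrite modn_small // lt (ltn_eqF lt) andbT andbF orbF.
  by rewrite modnn ltnn eqxx andbF andbT.
by case_le3 t; case_le3 u; rewrite /= ?orbF ?andbF ?andbT; split; lia.
Qed.

Lemma Jadj_jarc (u v : Jvert n) :
  Jadj u v <-> jarc n u.1 u.2 v.1 v.2 \/ jarc n v.1 v.2 u.1 u.2.
Proof. by rewrite /Jadj -!Jarc_jarc; split => [/orP|[] ->]; rewrite ?orbT. Qed.

Definition vdist (u v : Jvert n) : Z := jdist n u.1 u.2 v.1 v.2.

Lemma gdist_Jn (u v : Jvert n) : Z.of_nat (gdist (@Jadj n) u v) = vdist u v.
Proof.
have vdist_bounds w : (0 <= vdist u w <= Z.of_nat n + 2)%Z.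
  exact: jdist_bounds (fst_le3 u) (fst_le3 w) (ltn_ord u.2) (ltn_ord w.2).
suff -> : gdist (@Jadj n) u v = Z.to_nat (vdist u v).
  by rewrite Z2Nat.id //; case: (vdist_bounds v).
apply: (@gdist_potential _ _ u (fun w => Z.to_nat (vdist u w)))
  => [|w w' /Jadj_jarc arc | w wu | w].
- by rewrite /vdist jdist_refl ?fst_le3.
- have : (vdist u w' <= vdist u w + 1)%Z := jdist_lipschitz (fst_le3 u) (fst_le3 w)
    (fst_le3 w') (ltn_ord u.2) (ltn_ord w.2) (ltn_ord w'.2) arc.
  by have := vdist_bounds w; have := vdist_bounds w'; lia.
- have [tw [jw [tw3 jw_n arc E]]] :=
    jdist_pred (fst_le3 u) (fst_le3 w) (ltn_ord u.2) (ltn_ord w.2) (Jvert_neq wu).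
  exists (vtx tw jw); first by apply/Jadj_jarc; rewrite vtx_fst // vtx_snd.
  have : (vdist u (vtx tw jw) + 1 = vdist u w)%Z by rewrite /vdist vtx_fst // vtx_snd.
  by have := vdist_bounds w; have := vdist_bounds (vtx tw jw); lia.
- by rewrite card_prod !card_ord; have := vdist_bounds w; lia.
Qed.

Lemma mem_nearer_Jn (s y x1 x2 : Jvert n) :
  s \in nearer (@Jadj n) y x1 x2 <-> (vdist s y < vdist s x1 /\ vdist s y < vdist s x2)%Z.
Proof. by rewrite inE -!gdist_Jn; split => [/andP [] | []]; lia. Qed.

Definition slice (S : {set Jvert n}) (t : nat) : {set 'I_n} := [set i : 'I_n | vtx t i \in S].

Lemma card_Jn_slices (S : {set Jvert n}) :
  #|S| = #|slice S 0| + #|slice S 1| + #|slice S 2| + #|slice S 3|.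
Proof.
rewrite card_slices !big_ord_recl big_ord0 addn0 !addnA.
have sliceE (t : 'I_4) : [set i | (t, i) \in S] = slice S t.
  by apply/setP => i; rewrite !inE /vtx !inord_val.
by rewrite !sliceE.
Qed.

End FlowerSnark.

(** * Vertices forced into a 2-solid-resolving set *)

Definition forces (n ty iy : nat) (P : nat -> nat -> Prop) : Prop :=
  exists t1 i1 t2 i2, [/\ t1 <= 3, i1 < n, t2 <= 3 & i2 < n] /\
    ~ (t1 = ty /\ i1 = iy) /\ ~ (t2 = ty /\ i2 = iy) /\
    forall t j, t <= 3 -> j < n -> (jdist n t j ty iy < jdist n t j t1 i1)%Z ->
      (jdist n t j ty iy < jdist n t j t2 i2)%Z -> P t j.

Ltac forced_by t1 i1 t2 i2 :=
  exists t1, i1, t2, i2; split; [by split; lia | split; [lia | split; [lia |]]];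
  let t := fresh "t" in move=> t j t3 *; case_type t; lia.

Section Forcing.
Variable m : nat.
Hypothesis m_ge4 : 4 <= m.
Local Notation n := m.+1.

Lemma forced_vertex (S : {set Jvert n}) ty iy P : solid2_resolving (@Jadj n) S ->
  ty <= 3 -> iy < n -> forces n ty iy P -> exists2 s, s \in S & P s.1 s.2.
Proof.
move=> /solid2_resolvingP sepS ty3 iy_n [t1 [i1 [t2 [i2 [[t13 i1n t23 i2n] [ne1 [ne2 sep]]]]]]].
have vtx_neq t i : t <= 3 -> i < n -> ~ (t = ty /\ i = iy) -> vtx m t i != vtx m ty iy.
  move=> t3 i_n ne; apply: contra_notN ne => /eqP.
  move/(congr1 (fun v : Jvert n => (v.1 : nat, v.2 : nat))).
  by rewrite /= !vtx_fst ?vtx_snd // => -[].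
have [s sS /(mem_nearer_Jn m_ge4) []] :=
  sepS _ _ _ (vtx_neq _ _ t13 i1n ne1) (vtx_neq _ _ t23 i2n ne2).
rewrite /vdist !vtx_fst ?vtx_snd // => lt1 lt2.
by exists s => //; apply: sep (fst_le3 s) (ltn_ord s.2) lt1 lt2.
Qed.

Lemma forces_ab i : i < n -> forces n 1 i (fun t j => (t = 0 \/ t = 1) /\ j = i).
Proof.
case: i => [|i] i_n; first by forced_by 2 1 2 m.
have [im|im] := eqVneq i.+1 m; first by forced_by 3 0 3 i.
by forced_by 2 i.+2 3 i.
Qed.

Lemma forces_bc i : i < n -> forces n 1 i (fun t j => (t = 1 \/ t = 2) /\ j = i).
Proof.
case: i => [|i] i_n; first by forced_by 0 1 2 m.
have [im|im] := eqVneq i.+1 m; first by forced_by 0 0 3 i.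
by forced_by 0 i.+2 3 i.
Qed.

Lemma forces_bd i : i < n -> forces n 1 i (fun t j => (t = 1 \/ t = 3) /\ j = i).
Proof.
case: i => [|i] i_n; first by forced_by 0 1 3 m.
have [im|im] := eqVneq i.+1 m; first by forced_by 0 0 2 i.
by forced_by 0 i.+2 2 i.
Qed.

End Forcing.

Section OddFlowerSnark.
Variable h : nat.
Hypothesis h_ge2 : 2 <= h.
Local Notation n := (h + h).+1.

Let hh_ge4 : 4 <= h + h.
Proof. by lia. Qed.

(* The inner cycle c_0 ... c_(n-1) d_0 ... d_(n-1) of J_n, with c_i at position i and d_i at
   position n + i. *)
Definition inner_arc (w t j : nat) : Prop :=
  t = 2 /\ in_arc (n + n) h.+1 w j \/ t = 3 /\ in_arc (n + n) h.+1 w (n + j).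

Lemma forces_a_arc w : w < n -> forces n 0 w (fun t j => t = 0 /\ in_arc n h w j).
Proof.
rewrite /in_arc; case: w => [|[|w]] w_n; first by forced_by 0 (h + h - 1) 2 0.
  by forced_by 0 (h + h) 2 1.
by forced_by 0 w 2 w.+2.
Qed.

Lemma forces_c_arc i : i < n -> forces n 2 i (inner_arc i).
Proof.
rewrite /inner_arc /in_arc; case: i => [|i] i_n; first by forced_by 0 0 1 (h + h).
by forced_by 0 i.+1 1 i.
Qed.

Lemma forces_d_arc i : i < n -> forces n 3 i (inner_arc (n + i)).
Proof.
rewrite /inner_arc /in_arc; case: i => [|i] i_n; first by forced_by 0 0 1 (h + h).
by forced_by 0 i.+1 1 i.
Qed.

(** * The lower bound *)

Section LowerBound.
Variable S : {set Jvert n}.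
Hypothesis S_res : solid2_resolving (@Jadj n) S.

Lemma mem_vtx (s : Jvert n) t i :
  s \in S -> s.1 = t :> nat -> s.2 = i :> nat -> vtx (h + h) t i \in S.
Proof. by move=> sS <- <-; rewrite vtxK. Qed.

Lemma b_absent_slices (i : 'I_n) : i \notin slice S 1 ->
  [/\ i \in slice S 0, i \in slice S 2 & i \in slice S 3].
Proof.
rewrite !inE => bS.
have forced P : forces n 1 i P -> exists2 s, s \in S & P s.1 s.2 by apply: forced_vertex.
have [sa saS [[|] ta ia]] := forced _ (forces_ab hh_ge4 (ltn_ord i)).
  2: by rewrite (mem_vtx saS ta ia) in bS.
have [sc scS [[|] tc ic]] := forced _ (forces_bc hh_ge4 (ltn_ord i)).
  by rewrite (mem_vtx scS tc ic) in bS.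
have [sd sdS [[|] td id]] := forced _ (forces_bd hh_ge4 (ltn_ord i)).
  by rewrite (mem_vtx sdS td id) in bS.
by split; [apply: mem_vtx saS ta ia | apply: mem_vtx scS tc ic | apply: mem_vtx sdS td id].
Qed.

Lemma a_slice_card : 3 <= #|slice S 0|.
Proof.
have: n <= #|slice S 0| * h.
  apply: cover_arcs_card => [|w]; first by lia.
  have [s sS [t0 arc]] :=
    forced_vertex hh_ge4 S_res (leq0n 3) (ltn_ord w) (forces_a_arc (ltn_ord w)).
  by exists s.2; rewrite // inE (mem_vtx sS t0).
by nia.
Qed.

Definition inner_vtx (p : nat) : Jvert n :=
  if p < n then vtx (h + h) 2 p else vtx (h + h) 3 (p - n).

Lemma inner_slices_card : 4 <= #|slice S 2| + #|slice S 3|.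
Proof.
set A := [set p : 'I_(n + n) | inner_vtx p \in S].
have: n + n <= #|A| * h.+1.
  apply: cover_arcs_card => [|w]; first by lia.
  have [s sS arc] : exists2 s, s \in S & inner_arc w s.1 s.2.
    have [w_n|n_w] := ltnP w n.
      by have := forced_vertex hh_ge4 S_res (isT : 2 <= 3) w_n (forces_c_arc w_n).
    have wn_n : w - n < n by have := ltn_ord w; lia.
    have := forced_vertex hh_ge4 S_res (isT : 3 <= 3) wn_n (forces_d_arc wn_n).
    by rewrite subnKC.
  case: arc => [[t2 arc] | [t3 arc]].
    exists (lshift n s.2) => //; rewrite inE /inner_vtx /= ltn_ord.
    exact: mem_vtx sS t2 _.
  exists (@rshift n n s.2) => //; rewrite inE /inner_vtx /= ifN; last by rewrite -leqNgt leq_addr.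
  by apply: mem_vtx sS t3 _; rewrite addKn.
have: #|A| <= #|slice S 2| + #|slice S 3|.
  have A_sub : A \subset lshift n @: slice S 2 :|: @rshift n n @: slice S 3.
    apply/subsetP => p; rewrite !inE /inner_vtx; case: ifP => [p_n | /negbT n_p] pS; apply/orP.
      by left; apply/imsetP; exists (Ordinal p_n); rewrite ?inE //; apply: val_inj.
    have pn_n : p - n < n by have := ltn_ord p; lia.
    right; apply/imsetP; exists (Ordinal pn_n); first by rewrite inE.
    by apply: val_inj => /=; lia.
  apply: leq_trans (subset_leq_card A_sub) _; rewrite cardsU.
  by apply: leq_trans (leq_subr _ _) (leq_add (leq_imset_card _ _) (leq_imset_card _ _)).
by nia.
Qed.

(* The indices i with b_i outside S lie in the a-, c- and d-slices, so with k of them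
   |S| >= (n - k) + max(k, 3) + max(2k, 4) >= n + 5. *)
Lemma lower_bound : n + 5 <= #|S|.
Proof.
have [a_card inner_card] := (a_slice_card, inner_slices_card).
have K_sub t : t \in [:: 0; 2; 3] -> ~: slice S 1 \subset slice S t.
  move=> tE; apply/subsetP => i; rewrite inE => /b_absent_slices [].
  by move: tE; rewrite !inE => /or3P [] /eqP ->.
have := subset_leq_card (K_sub 0 isT); have := subset_leq_card (K_sub 2 isT).
have := subset_leq_card (K_sub 3 isT); have := cardsC (slice S 1).
by rewrite card_ord card_Jn_slices; lia.
Qed.

End LowerBound.

(** * The upper bound *)

Definition two_of_three (A B C : Prop) : Prop := A /\ B \/ A /\ C \/ B /\ C.

Lemma two_of_three_common A1 B1 C1 A2 B2 C2 :
  two_of_three A1 B1 C1 -> two_of_three A2 B2 C2 -> A1 /\ A2 \/ B1 /\ B2 \/ C1 /\ C2.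
Proof. by rewrite /two_of_three; tauto. Qed.

Lemma two_of_three_lt (a1 b1 a2 b2 a3 b3 : Z) :
  ~ (b1 <= a1 /\ b2 <= a2)%Z -> ~ (b1 <= a1 /\ b3 <= a3)%Z -> ~ (b2 <= a2 /\ b3 <= a3)%Z ->
  two_of_three (a1 < b1)%Z (a2 < b2)%Z (a3 < b3)%Z.
Proof. by rewrite /two_of_three; lia. Qed.

Ltac resolved_by t1 i1 t2 i2 t3 i3 :=
  exists t1, i1, t2, i2, t3, i3;
  split; [by split; lia | split; [by split; lia | split; [by split; lia |]]];
  let t := fresh "t" in move=> t j ? ? ?; apply: two_of_three_lt; case_type t; lia.

Definition basis (t i : nat) : Prop :=
  t = 0 /\ (i = 0 \/ i = h \/ i = h.+1) \/ t = 1 /\ i <> 0 /\ i <> h \/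
  (t = 2 \/ t = 3) /\ (i = 0 \/ i = h).

Lemma basis_triple ty iy : ty <= 3 -> iy < n -> ~ basis ty iy ->
  exists t1 i1 t2 i2 t3 i3, [/\ basis t1 i1, basis t2 i2 & basis t3 i3] /\
    [/\ t1 <= 3, t2 <= 3 & t3 <= 3] /\ [/\ i1 < n, i2 < n & i3 < n] /\
    forall t j, t <= 3 -> j < n -> ~ (t = ty /\ j = iy) ->
      two_of_three (jdist n t1 i1 ty iy < jdist n t1 i1 t j)%Z
        (jdist n t2 i2 ty iy < jdist n t2 i2 t j)%Z
        (jdist n t3 i3 ty iy < jdist n t3 i3 t j)%Z.
Proof.
rewrite /basis => ty3 iy_n not_basis; case_le3 ty; have [iy_h|h_iy] := ltnP iy h.
- by resolved_by 0 0 0 h 1 iy.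
- by resolved_by 0 0 0 h.+1 1 iy.
- by resolved_by 0 0 2 0 3 0.
- by resolved_by 0 h 2 h 3 h.
- by resolved_by 2 0 2 h 1 iy.
- by resolved_by 3 0 2 h 1 iy.
- by resolved_by 3 0 3 h 1 iy.
- by resolved_by 2 0 3 h 1 iy.
Qed.

Definition basis_slice (t : nat) : {set 'I_n} :=
  if t == 0 then [set inord 0; inord h; inord h.+1]
  else if t == 1 then ~: [set inord 0; inord h] else [set inord 0; inord h].

Definition basis_set : {set Jvert n} := [set v : Jvert n | v.2 \in basis_slice v.1].

Lemma mem_basis_set (v : Jvert n) : v \in basis_set <-> basis v.1 v.2.
Proof.
case: v => [[t t4] [i i_n]]; rewrite inE /basis_slice /basis /=.
have t3 : t <= 3 by lia.
by case_le3 t; rewrite /= !inE -!val_eqE /= !inordK //; try lia; split => ?; lia.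
Qed.

Lemma basis_set_resolving : solid2_resolving (@Jadj n) basis_set.
Proof.
apply/solid2_resolvingP => y x1 x2 x1y x2y.
have [yB|yNB] := boolP (y \in basis_set); first by exists y; last exact: nearer_self.
have [t1 [i1 [t2 [i2 [t3 [i3 [[B1 B2 B3] [[t13 t23 t33] [[i1n i2n i3n] resolve]]]]]]]]] :=
  basis_triple (fst_le3 y) (ltn_ord y.2) (fun B => negP yNB (proj2 (mem_basis_set y) B)).
have near t i : t <= 3 -> i < n -> basis t i ->
    (jdist n t i y.1 y.2 < jdist n t i x1.1 x1.2)%Z ->
    (jdist n t i y.1 y.2 < jdist n t i x2.1 x2.2)%Z ->
    exists2 s, s \in basis_set & s \in nearer (@Jadj n) y x1 x2.
  move=> t_le3 i_n Bti lt1 lt2; exists (vtx (h + h) t i).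
    by apply/mem_basis_set; rewrite vtx_fst ?vtx_snd.
  by apply/(mem_nearer_Jn hh_ge4); rewrite /vdist vtx_fst ?vtx_snd.
have R1 := resolve _ _ (fst_le3 x1) (ltn_ord x1.2) (Jvert_neq x1y).
have R2 := resolve _ _ (fst_le3 x2) (ltn_ord x2.2) (Jvert_neq x2y).
have [[lt1 lt2]|[[lt1 lt2]|[lt1 lt2]]] := two_of_three_common R1 R2.
- exact: near t13 i1n B1 lt1 lt2.
- exact: near t23 i2n B2 lt1 lt2.
- exact: near t33 i3n B3 lt1 lt2.
Qed.

Lemma card_basis_set : #|basis_set| = n + 5.
Proof.
have sliceE t : t <= 3 -> slice basis_set t = basis_slice t.
  by move=> t3; apply/setP => i; rewrite !inE vtx_fst // -[X in X \in _]inord_val.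
have ord_neq a b : a < n -> b < n -> a != b -> inord a != inord b :> 'I_n.
  by move=> a_n b_n; apply: contra => /eqP/(congr1 val); rewrite /= !inordK // => ->.
have n0h : inord 0 != inord h :> 'I_n by apply: ord_neq; lia.
have compl2 : #|~: [set inord 0; inord h : 'I_n]| = n - 2.
  by rewrite cardsCs setCK card_ord cards2 n0h.
rewrite card_Jn_slices !sliceE // /basis_slice /= compl2 [[set _; _; _]]setUC cardsU1 cards2 n0h.
by rewrite !inE negb_or !ord_neq //=; lia.
Qed.

End OddFlowerSnark.

Theorem mainTheorem16 (n : nat) (Hn : 5 <= n) (Hodd : odd n) :
  (exists S : {set Jvert n}, solid2_resolving (@Jadj n) S /\ #|S| = n + 5) /\
  (forall S : {set Jvert n}, solid2_resolving (@Jadj n) S -> n + 5 <= #|S|).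
Proof.
have [h nE] : exists h, n = (h + h).+1.
  by exists n./2; rewrite -[LHS]odd_double_half Hodd addnn.
have h_ge2 : 2 <= h by lia.
subst n; split; last exact: lower_bound.
by exists (basis_set h); split; [exact: basis_set_resolving | exact: card_basis_set].
Qed.
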